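(* Assume the standing assumptions and fix a function $h$ satisfying (h1)–(h4). Let $\tau=\min\{n\ge1:S_n\le0\}$ and suppose $\lim_{x\to\infty}\delta_\tau(x)=0$. Then for every stopping time $\sigma$ (with respect to an admissible filtration) with $\mathbf E\sigma<\infty$, we have $\lim_{x\to\infty}\delta_\sigma(x)=0$.
   Context: Standing assumptions: $\{\xi_n\}_{n\ge1}$ are i.i.d. real random variables with common distribution function $F$ and finite mean $\mathbf E\xi_1=-m<0$. $F$ is long-tailed: $\overline F(x)=1-F(x)>0$ for all $x$, and $\overline F(x-c)/\overline F(x)\to1$ as $x\to\infty$ for every fixed $c>0$. Notation: $S_0=0$ and $S_n=\sum_{i=1}^n\xi_i$. Admissible filtration: stopping times are taken with respect to a filtration $\{\mathcal F_n\}_{n\ge0}$ such that $\xi_n$ is $\mathcal F_n$-measurable and $\xi_{n+1}$ is independent of $\mathcal F_n$. The function $h:\mathbb R_+\to\mathbb R_+$ satisfies: - (h1) $h(x)\le x/2$; - (h2) $h(x)\to\infty$; - (h3) $\overline F(x-h(x))/\overline F(x)\to1$ as $x\to\infty$; - (h4) there exists $x_0$ with $h(x+t)\le h(x)+t$ for all $x\ge x_0$, $t\ge0$. For $x\ge0$, let $\mu(x)=\min\{n:S_n>x\}$, with $\min\emptyset=\infty$. For a stopping time $\sigma$, define $$A_{\sigma,2}(x)=\{\mu(x)\le\sigma,\ S_{\mu(x)-1}>h(x)\},\qquad \delta_\sigma(x)=\sup_{y\ge x}\frac{\mathbf P(A_{\sigma,2}(y))}{\overline F(y)}.$$ *)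

From HB Require Import structures.
From mathcomp Require Import all_boot all_order all_algebra.
From mathcomp Require Import all_classical all_reals all_analysis.
Set Implicit Arguments. Unset Strict Implicit. Unset Printing Implicit Defensive.
Import Order.TTheory GRing.Theory Num.Theory.
Import numFieldNormedType.Exports.
Local Open Scope classical_set_scope.
Local Open Scope ring_scope.

(* Random walk S_n = xi_1 + ... + xi_n (the value xi 0 is ignored). *)
Definition rwS {T : Type} {R : realType} (xi : nat -> T -> R) (n : nat) (w : T) : R :=
  \sum_(1 <= i < n.+1) xi i w.

(* first n with p n, or None (= infinity) *)
Definition first_hit (p : pred nat) : option nat :=
  match pselect (exists n, p n) with
  | left h => Some (ex_minn h)
  | right _ => None
  end.

(* n <= s, with None standing for +infinity *)
Definition le_opt (n : nat) (s : option nat) : bool :=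
  if s is Some k then (n <= k)%N else true.

Definition mu_time {T : Type} {R : realType} (xi : nat -> T -> R) (x : R) (w : T) :=
  first_hit (fun n => x < rwS xi n w).

Definition tau_time {T : Type} {R : realType} (xi : nat -> T -> R) (w : T) :=
  first_hit (fun n => (0 < n)%N && (rwS xi n w <= 0)).

Definition A2 {T : Type} {R : realType} (xi : nat -> T -> R) (h : R -> R)
  (sigma : T -> option nat) (x : R) : set T :=
  [set w | match mu_time xi x w with
           | Some n => le_opt n (sigma w) && (h x < rwS xi n.-1 w)
           | None => false
           end].

Section Prob.
Context {d : measure_display} {T : measurableType d} {R : realType}.
Variable P : probability T R.

Definition cdf (X : T -> R) (y : R) : R := fine (P [set w | X w <= y]).
Definition tailF (X : T -> R) (y : R) : R := 1 - cdf X y.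

Definition delta (xi : nat -> T -> R) (h : R -> R) (sigma : T -> option nat)
  (x : R) : \bar R :=
  ereal_sup [set ((fine (P (A2 xi h sigma y))) / tailF (xi 1%N) y)%:E
            | y in [set y | x <= y]].

Definition mutually_indep (xi : nat -> T -> R) : Prop :=
  forall (s : seq nat) (B : nat -> set R), uniq s -> all (fun i => 0 < i)%N s ->
    (forall i, measurable (B i)) ->
    P (\big[setI/setT]_(i <- s) (xi i @^-1` B i)) =
    (\prod_(i <- s) P (xi i @^-1` B i))%E.

Definition ident_distr (xi : nat -> T -> R) : Prop :=
  forall n (B : set R), (0 < n)%N -> measurable B ->
    P (xi n @^-1` B) = P (xi 1%N @^-1` B).

Definition admissible_filtration (xi : nat -> T -> R) (Fn : nat -> set (set T)) : Prop :=
  [/\ (forall n, sigma_algebra setT (Fn n)),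
      (forall n A, Fn n A -> measurable A),
      (forall n A, Fn n A -> Fn n.+1 A),
      (forall n B, (0 < n)%N -> measurable B -> Fn n (xi n @^-1` B)) &
      (forall n A B, Fn n A -> measurable B ->
          P (A `&` xi n.+1 @^-1` B) = (P A * P (xi n.+1 @^-1` B))%E)].

Definition stopping_time (Fn : nat -> set (set T)) (sigma : T -> option nat) : Prop :=
  forall n, Fn n [set w | sigma w = Some n].

Definition opt_to_ereal (s : option nat) : \bar R :=
  if s is Some n then (n%:R)%:E else +oo%E.

Definition finite_mean_time (sigma : T -> option nat) : Prop :=
  (\int[P]_w opt_to_ereal (sigma w) < +oo)%E.

End Prob.

(* Let j be the last time before mu(x) at which the walk attains its minimum
   over [0, mu(x) - 1].  On A_{sigma,2}(x) we have sigma > j, an F_j-event, and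
   the increments after j describe a walk from 0 that stays positive until it
   first exceeds x - S_j, just before which it lies above h(x) - S_j.  These
   increments are independent of F_j and distributed like the whole sequence
   (a Dynkin argument), and by (h4) such a path of a fresh walk realises
   A_{tau,2}(x - S_j), of probability at most delta_tau(x) Fbar(x).  Summing
   over j, with P(sigma > j) summing to E sigma, gives
   delta_sigma(x) <= (E sigma + 1) delta_tau(x); the random level -S_j is
   handled by rounding it up to finer and finer grids. *)

From HB Require Import structures.
From mathcomp Require Import all_boot all_order all_algebra.
From mathcomp Require Import all_classical all_reals all_analysis.
From mathcomp Require Import lra measurable_realfun.
Import Order.TTheory GRing.Theory Num.Theory.
Import numFieldNormedType.Exports.
Set Implicit Arguments. Unset Strict Implicit. Unset Printing Implicit Defensive.
Local Open Scope classical_set_scope.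
Local Open Scope ring_scope.

Lemma first_hitP (p : pred nat) n :
  first_hit p = Some n <-> p n /\ forall i, (i < n)%N -> ~~ p i.
Proof.
rewrite /first_hit; case: pselect => [ex|nex]; last first.
  by split=> // -[pn _]; case: nex; exists n.
case: ex_minnP => k pk kmin; split=> [[<-]|[pn hn]].
  by split=> // i ik; apply/negP => /kmin; rewrite leqNgt ik.
by congr Some; apply/eqP; rewrite eqn_leq kmin // leqNgt; apply/negP => /hn; rewrite pk.
Qed.

Lemma le_optP n s : le_opt n s <-> forall k, (k < n)%N -> s <> Some k.
Proof.
case: s => [m|] /=; split => // [nm k kn [km]|hm].
  by move: kn; rewrite -km ltnNge nm.
by rewrite leqNgt; apply/negP => /hm; apply.
Qed.

Lemma exists_last_argmin (dX : Order.disp_t) (X : orderType dX) (f : nat -> X) N :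
  exists2 j, (j <= N)%N & (forall k, (k <= N)%N -> (f j <= f k)%O) /\
                         (forall k, (j < k <= N)%N -> (f j < f k)%O).
Proof.
elim: N => [|N [j jN [jmin jlast]]].
  exists 0%N => //; split=> [k|k /andP[k0 k0']]; first by rewrite leqn0 => /eqP ->.
  by move: (leq_trans k0 k0').
have [leN|ltj] := leP (f N.+1) (f j).
  exists N.+1 => //; split=> [k|k /andP[Nk kN]]; last by move: (leq_trans Nk kN); rewrite ltnn.
  by rewrite leq_eqVlt ltnS => /orP[/eqP -> //|kN]; exact: le_trans leN (jmin _ kN).
exists j; first exact: leqW.
split=> [k|k /andP[jk]]; rewrite leq_eqVlt ltnS => /orP[/eqP -> //|kN].
- exact: ltW.
- exact: jmin.
- by apply: jlast; rewrite jk.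
Qed.

Lemma rwS0 {T : Type} {R : realType} (xi : nat -> T -> R) w : rwS xi 0 w = 0.
Proof. by rewrite /rwS big_geq. Qed.

Lemma rwSS {T : Type} {R : realType} (xi : nat -> T -> R) n w :
  rwS xi n.+1 w = rwS xi n w + xi n.+1 w.
Proof. by rewrite /rwS big_nat_recr. Qed.

Lemma rwS_add {T : Type} {R : realType} (xi : nat -> T -> R) j k w :
  rwS xi (j + k) w = rwS xi j w + \sum_(i < k) xi (j + 1 + i)%N w.
Proof.
rewrite /rwS (@big_cat_nat _ _ _ j.+1) //=; last by rewrite ltnS leq_addr.
congr (_ + _); rewrite -{1}[j.+1]add0n big_addn subSS addKn big_mkord.
by apply: eq_bigr => i _; rewrite addnC addn1.
Qed.

Section MeasurableSets.
Context {d : measure_display} {X : measurableType d}.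

Lemma measurable_bool_set (b : X -> bool) :
  measurable_fun setT b -> measurable [set x | b x].
Proof.
move=> mb; have := mb measurableT [set true] I.
by rewrite setTI; congr measurable; apply/seteqP; split => x /=.
Qed.

Lemma measurable_forall (A : nat -> set X) : (forall i, measurable (A i)) ->
  measurable [set x | forall i, A i x].
Proof.
move=> mA; rewrite (_ : [set x | _] = \bigcap_i A i); first exact: bigcapT_measurable.
by apply/seteqP; split => x /= h i //; exact: h.
Qed.

Lemma measurable_exists (A : nat -> set X) : (forall i, measurable (A i)) ->
  measurable [set x | exists i, A i x].
Proof.
move=> mA; rewrite (_ : [set x | _] = \bigcup_i A i); first exact: bigcupT_measurable.
by apply/seteqP; split => x /= [i]; exists i.
Qed.

Lemma measurable_implies (b : bool) (A : set X) :
  (b -> measurable A) -> measurable [set x | b -> A x].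
Proof.
case: b => mA; last by rewrite (_ : [set x | _] = setT) //; apply/seteqP; split.
by congr measurable: (mA isT); apply/seteqP; split => x /=; [move=> ? ?|apply].
Qed.

Lemma measurable_first_hit (p : nat -> X -> bool) n :
  (forall k, measurable_fun setT (p k)) ->
  measurable [set x | first_hit (fun k => p k x) = Some n].
Proof.
move=> mp; rewrite (_ : [set x | _] =
    [set x | p n x] `&` [set x | forall i, (i < n)%N -> ~~ p i x]).
  apply: measurableI; first exact: measurable_bool_set.
  apply: measurable_forall => i; apply: measurable_implies => _.
  exact/measurable_bool_set/measurable_neg.
by apply/seteqP; split => x /first_hitP.
Qed.

Lemma measurable_le_opt (s : X -> option nat) n :
  (forall k, (k < n)%N -> measurable [set x | s x = Some k]) ->
  measurable [set x | le_opt n (s x)].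
Proof.
move=> ms; rewrite (_ : [set x | _] = [set x | forall k, (k < n)%N -> ~ s x = Some k]).
  apply: measurable_forall => k.
  apply: (measurable_implies (A := ~` [set x | s x = Some k])) => kn.
  exact/measurableC/ms.
by apply/seteqP; split => x /le_optP.
Qed.

End MeasurableSets.

Lemma measure_liminf_le d (T : measurableType d) (R : realType)
    (mu : {measure set T -> \bar R}) (E : nat -> set T) (c : \bar R) :
  (forall l, measurable (E l)) -> (forall l, (mu (E l) <= c)%E) ->
  (mu (\bigcup_k [set w | forall l, (k <= l)%N -> E l w]) <= c)%E.
Proof.
move=> mE Ec; set C := fun k => [set w | forall l, (k <= l)%N -> E l w].
have mC k : measurable (C k).
  by apply: measurable_forall => l; exact: measurable_implies.
have C_nd : {homo C : n m / (n <= m)%N >-> (n <= m)%O}.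
  by move=> n m nm; apply/subsetPset => w Cw l ml; apply: Cw; exact: leq_trans ml.
have Ccvg := @nondecreasing_cvg_mu _ _ _ mu C mC (bigcupT_measurable _ mC) C_nd.
rewrite -(cvg_lim _ Ccvg) //; apply: lime_le; first by apply/cvg_ex; exists (mu (\bigcup_k C k)).
apply: nearW => k /=; apply: le_trans (Ec k).
by apply: le_measure; rewrite ?inE // => w; apply.
Qed.

Lemma nneseries_le_opt (R : realType) (s : option nat) :
  (\sum_(0 <= j <oo) ((le_opt j.+1 s)%:R)%:E = opt_to_ereal s :> \bar R)%E.
Proof.
case: s => [n|] /=.
  rewrite (nneseries_split 0 n) // eseries0 => [|i]; last by rewrite add0n leqNgt => /negbTE ->.
  rewrite adde0 add0n sumEFin (eq_big_nat _ _ (F2 := fun=> 1)) ?sumr_const_nat ?subn0 //.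
  by move=> i /andP[_ ->].
apply/eqyP => A A0; have /andP[_ An] := truncn_itv (ltW A0).
rewrite (nneseries_split 0 (Num.truncn A).+1) //.
apply: le_trans (lee_paddr _ (lexx _)); last exact: nneseries_ge0.
by rewrite sumEFin sumr_const_nat subn0 lee_fin ltW.
Qed.

Lemma nneseries_measure_le_opt d (T : measurableType d) (R : realType)
    (mu : {measure set T -> \bar R}) (s : T -> option nat) :
  (forall k, measurable [set w | s w = Some k]) ->
  (\sum_(0 <= j <oo) mu [set w | le_opt j.+1 (s w)] = \int[mu]_w opt_to_ereal (s w))%E.
Proof.
move=> ms; have mle j : measurable [set w | le_opt j (s w)].
  by apply: measurable_le_opt => k _.
rewrite (eq_integral (fun w => \sum_(0 <= j <oo) (\1_[set w | le_opt j.+1 (s w)] w)%:E)%E).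
  rewrite integral_nneseries // => [|j]; last exact/measurable_EFinP/measurable_indic.
  by apply: eq_eseriesr => j _; rewrite integral_indic ?setIT.
move=> w _; rewrite -nneseries_le_opt; apply: eq_eseriesr => j _.
rewrite indicE; case: (boolP (le_opt j.+1 (s w))) => hs; first by rewrite mem_set.
by rewrite memNset //; apply/negP.
Qed.

Section PathSpace.
Variable R : realType.

Definition cylinder N (B : nat -> set R) : set (nat -> R) :=
  [set y | forall i, (i < N)%N -> B i (y i)].

Definition cylinders : set (set (nat -> R)) :=
  [set A | exists N B, (forall i, measurable (B i)) /\ A = cylinder N B].

Lemma cylinder0 B : cylinder 0 B = setT.
Proof. by apply/seteqP; split. Qed.

Lemma cylinderS N B : cylinder N.+1 B = cylinder N B `&` [set y | B N (y N)].
Proof.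
apply/seteqP; split => y.
  by move=> yB; split=> [i iN|]; apply: yB => //; exact: ltnW.
by move=> [yB yN] i; rewrite ltnS leq_eqVlt => /orP[/eqP -> //|]; exact: yB.
Qed.

Lemma cylinders_setI_closed : setI_closed cylinders.
Proof.
move=> _ _ [N1 [B1 [mB1 ->]]] [N2 [B2 [mB2 ->]]].
pose B i := (if (i < N1)%N then B1 i else setT) `&` (if (i < N2)%N then B2 i else setT).
exists (maxn N1 N2), B; split.
  by move=> i; apply: measurableI; case: ifP.
apply/seteqP; split => y.
  by move=> [y1 y2] i _; split; case: ifP => // iN; [exact: y1|exact: y2].
move=> yB; split=> i iN.
  by have [] := yB i; rewrite ?leq_max ?iN.
by have [] := yB i; rewrite ?leq_max ?iN ?orbT.
Qed.

Definition path_space := g_sigma_algebraType cylinders.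

Lemma measurable_coord i : measurable_fun setT (fun y : path_space => y i).
Proof.
move=> _ B mB; rewrite setTI; apply: sub_sigma_algebra.
exists i.+1, (fun k => if k == i then B else setT); split.
  by move=> k; case: ifP.
apply/seteqP; split => y /=.
  by move=> yB k _; case: ifP => // /eqP ->.
by move=> /(_ i); rewrite ltnSn eqxx; apply.
Qed.

Definition psum k (y : nat -> R) := \sum_(i < k) y i.

Lemma measurable_psum k : measurable_fun setT (psum k : path_space -> R).
Proof. by apply: measurable_sum => i; exact: measurable_coord. Qed.

Definition excursion (h : R -> R) (x z : R) : set (nat -> R) := [set y | exists m,
  (x + z < psum m y) && (h x + z < psum m.-1 y) /\
  forall i, (i < m)%N -> (psum i y <= x + z) && ((0 < i)%N ==> (0 < psum i y))].

Lemma measurable_excursion h x z : measurable (excursion h x z : set path_space).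
Proof.
apply: measurable_exists => m; apply: measurableI.
  by apply/measurable_bool_set/measurable_and;
    apply: measurable_fun_ltr => //; exact: measurable_psum.
apply: measurable_forall => i; apply: measurable_implies => _.
apply/measurable_bool_set/measurable_and.
  by apply: measurable_fun_ler => //; exact: measurable_psum.
by case: (0 < i)%N => //=; apply: measurable_fun_ltr => //;
  exact: measurable_psum.
Qed.

Lemma excursion_right_stable h x Z y : excursion h x Z y ->
  exists2 g, 0 < g & forall z, Z <= z < Z + g -> excursion h x z y.
Proof.
move=> [m [/andP[up pre] before]].
set g := Num.min (psum m y - (x + Z)) (psum m.-1 y - (h x + Z)).
exists g; first by rewrite lt_min !subr_gt0 up pre.
have [gup gpre] : g <= psum m y - (x + Z) /\ g <= psum m.-1 y - (h x + Z).
  by rewrite !ge_min !lexx orbT.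
move=> z /andP[Zz zg]; exists m; split; first by apply/andP; split; lra.
move=> i im; have /andP[bi pos] := before i im.
by rewrite pos andbT; lra.
Qed.

Definition grid_point (l : nat) (Z : R) : R :=
  (Num.truncn ((l.+1)%:R * Z)).+1%:R / (l.+1)%:R.

Lemma grid_point_approx Z g : 0 <= Z -> 0 < g ->
  exists k, forall l, (k <= l)%N -> Z <= grid_point l Z < Z + g.
Proof.
move=> Z0 g0; exists (Num.truncn g^-1) => l kl.
have l0 : 0 < (l.+1)%:R :> R by rewrite ltr0n.
have /andP[lo hi] := truncn_itv (mulr_ge0 (ler0n _ l.+1) Z0).
have /andP[_ ginv] : (Num.truncn g^-1)%:R <= g^-1 < (Num.truncn g^-1).+1%:R.
  by apply: truncn_itv; rewrite invr_ge0 ltW.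
have lg : (l.+1)%:R^-1 < g.
  rewrite -[g]invrK ltf_pV2 ?posrE ?invr_gt0 //.
  by apply: lt_le_trans ginv _; rewrite ler_nat.
rewrite /grid_point ler_pdivlMr // [Z * _]mulrC ltW //=.
rewrite -natr1 mulrDl ler_ltD //; last by rewrite mul1r.
by rewrite ler_pdivrMr // [Z * _]mulrC.
Qed.

End PathSpace.

Arguments cylinders : clear implicits.

Section Filtration.
Context {d : measure_display} {T : measurableType d} {R : realType}.
Variables (P : probability T R) (xi : nat -> T -> R) (Fn : nat -> set (set T)).
Hypothesis Fn_adm : admissible_filtration P xi Fn.

Lemma filtrationE k A : Fn k A <-> @measurable _ (g_sigma_algebraType (Fn k)) A.
Proof.
have Fk : sigma_algebra setT (Fn k) by case: Fn_adm.
by split => FA; [exact: sub_sigma_algebra|rewrite -(sigma_algebra_id Fk)].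
Qed.

Lemma filtration_measurable k A : Fn k A -> measurable A.
Proof. by case: Fn_adm => _ + _ _ _; apply. Qed.

Lemma filtration_le j k A : (j <= k)%N -> Fn j A -> Fn k A.
Proof.
case: Fn_adm => _ _ FS _ _ /subnK <-; elim: (k - j)%N => // n IH /IH.
by rewrite addSn; exact: FS.
Qed.

Lemma filtration_xi n k B : (0 < n)%N -> (n <= k)%N -> measurable B ->
  Fn k (xi n @^-1` B).
Proof. by case: Fn_adm => _ _ _ Fxi _ n0 nk mB; apply: (filtration_le nk); exact: Fxi. Qed.

Lemma filtration_setI k A B : Fn k A -> Fn k B -> Fn k (A `&` B).
Proof. by move=> /filtrationE FA /filtrationE FB; apply/filtrationE; exact: measurableI. Qed.

Lemma measurable_rwS_filtration j n : (n <= j)%N ->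
  measurable_fun setT (rwS xi n : g_sigma_algebraType (Fn j) -> R).
Proof.
elim: n => [_|n IH nj].
  by rewrite (_ : rwS xi 0 = fun=> 0); [exact: measurable_cst|apply/funext => w; exact: rwS0].
rewrite (_ : rwS xi n.+1 = rwS xi n \+ xi n.+1); last by apply/funext => w; exact: rwSS.
apply: measurable_funD; first by apply: IH; exact: ltnW.
by move=> _ B mB; rewrite setTI; apply/filtrationE; exact: filtration_xi.
Qed.

Definition incr_from j (w : T) : path_space R := fun i => xi (j + 1 + i)%N w.

Lemma psum_incr_from j k w : psum k (incr_from j w) = rwS xi (j + k) w - rwS xi j w.
Proof. by rewrite rwS_add addrC addKr. Qed.

Lemma filtration_incr_from_cylinder j N B : (forall i, measurable (B i)) ->
  Fn (j + N) (incr_from j @^-1` cylinder N B).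
Proof.
move=> mB; elim: N => [|N IH]; first by rewrite cylinder0 preimage_setT; apply/filtrationE.
rewrite cylinderS preimage_setI; apply: filtration_setI.
  by apply: filtration_le IH; rewrite addnS.
by apply: filtration_xi => //; rewrite addn1 addSn // addnS.
Qed.

Lemma measure_setI_incr_from_cylinder j N G B : Fn j G -> (forall i, measurable (B i)) ->
  P (G `&` incr_from j @^-1` cylinder N B) =
  (P G * \prod_(i < N) P (xi (j + 1 + i)%N @^-1` B i))%E.
Proof.
move=> FG mB; elim: N => [|N IH]; first by rewrite cylinder0 preimage_setT setIT big_ord0 mule1.
rewrite cylinderS preimage_setI setIA big_ord_recr /= muleA -IH.
have -> : (j + 1 + N = (j + N).+1)%N by rewrite addn1 addSn.
have -> : incr_from j @^-1` [set y | B N (y N)] = xi (j + N).+1 @^-1` B N.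
  by rewrite /preimage /incr_from /= addn1 addSn.
case: Fn_adm => _ _ _ _ Findep; apply: Findep (mB N); apply: filtration_setI.
  by apply: filtration_le FG; exact: leq_addr.
exact: filtration_incr_from_cylinder.
Qed.

Lemma measurable_incr_from j : measurable_fun setT (incr_from j).
Proof.
apply: (measurability (cylinders R : set (set (path_space R)))) => // _ [_ [N [B [mB ->]]] <-].
by rewrite setTI; apply: filtration_measurable; exact: filtration_incr_from_cylinder.
Qed.

Lemma measurable_incr_from_preimage j (A : set (path_space R)) :
  measurable A -> measurable (incr_from j @^-1` A).
Proof. by move=> mA; rewrite -[_ @^-1` _]setTI; exact: measurable_incr_from. Qed.

Hypothesis xi_id : ident_distr P xi.

Lemma incr_from_indep j (A : set (path_space R)) : measurable A -> forall G, Fn j G ->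
  P (G `&` incr_from j @^-1` A) = (P G * P (incr_from 0 @^-1` A))%E.
Proof.
move: A; apply: (@dynkin_induction _ (path_space R) (cylinders R) (fun A =>
  forall G, Fn j G -> P (G `&` incr_from j @^-1` A) = (P G * P (incr_from 0 @^-1` A))%E)).
- by [].
- exact: cylinders_setI_closed.
- by move=> G _; rewrite !preimage_setT setIT probability_setT mule1.
- move=> _ [N [B [mB ->]]] G FG.
  have FT : Fn 0 setT by apply/filtrationE.
  rewrite -[incr_from 0 @^-1` _]setTI !measure_setI_incr_from_cylinder // probability_setT mul1e.
  congr (_ * _)%E; apply: eq_bigr => i _.
  by rewrite (xi_id (n := (j + 1 + i)%N)) ?(xi_id (n := (0 + 1 + i)%N)) ?addn1.
- move=> S mS indepS G FG; have mG := filtration_measurable FG.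
  have mSj := measurable_incr_from_preimage j mS; have mS0 := measurable_incr_from_preimage 0 mS.
  have preC k : incr_from k @^-1` (~` S) = ~` (incr_from k @^-1` S) by [].
  rewrite !preC -setDE measureD //; last by rewrite ltey_eq fin_num_measure.
  transitivity (P G - P G * P (incr_from 0 @^-1` S))%E; first by congr (_ - _)%E; exact: indepS.
  by rewrite probability_setC // muleBr ?mule1 ?fin_num_measure.
- move=> F mF tF indepF G FG; have mG := filtration_measurable FG.
  have tincr k : trivIset setT (fun n => incr_from k @^-1` F n).
    apply/trivIsetP => m n _ _ mn; rewrite -preimage_setI.
    by move/trivIsetP: tF => /(_ _ _ _ _ mn) ->; rewrite ?preimage_set0.
  have preU k : incr_from k @^-1` (\bigcup_n F n) = \bigcup_n (incr_from k @^-1` F n).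
    exact: preimage_bigcup.
  rewrite !preU setI_bigcupr !measure_bigcup //; last 3 first.
  - by move=> n _; exact: measurable_incr_from_preimage.
  - by move=> n _; apply: measurableI => //; exact: measurable_incr_from_preimage.
  - exact/trivIset_setIl/tincr.
  rewrite -(fineK (fin_num_measure P _ mG)) -nneseriesZl //.
  by apply: eq_eseriesr => n _; rewrite fineK ?fin_num_measure //; exact: indepF.
Qed.

End Filtration.

Section Excursion.
Context {d : measure_display} {T : measurableType d} {R : realType}.
Variables (xi : nat -> T -> R) (h : R -> R).
Hypothesis xi_meas : forall n, measurable_fun setT (xi n).

Local Notation S := (rwS xi).

Lemma measurable_rwS n : measurable_fun setT (S n).
Proof. by apply: measurable_sum => i; exact: xi_meas. Qed.

Lemma measurable_A2 (s : T -> option nat) x :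
  (forall k, measurable [set w | s w = Some k]) -> measurable (A2 xi h s x).
Proof.
move=> ms; rewrite (_ : A2 xi h s x = [set w | exists n,
    ([set w | mu_time xi x w = Some n] `&` [set w | le_opt n (s w)] `&`
     [set w | h x < S n.-1 w]) w]).
  apply: measurable_exists => n; apply: measurableI; first apply: measurableI.
  - apply: (measurable_first_hit (p := fun k w => x < S k w)) => k.
    by apply: measurable_fun_ltr => //; exact: measurable_rwS.
  - by apply: measurable_le_opt => k _.
  - apply: measurable_bool_set.
    by apply: measurable_fun_ltr => //; exact: measurable_rwS.
apply/seteqP; split => w; rewrite /A2 /=.
  by case: (mu_time xi x w) => [n|] // /andP[sn hn]; exists n.
by case=> n [[-> sn hn]]; rewrite sn hn.
Qed.

Lemma measurable_tau k : measurable [set w | tau_time xi w = Some k].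
Proof.
apply: (measurable_first_hit (p := fun k w => (0 < k)%N && (S k w <= 0))) => n.
apply: measurable_and => //.
by apply: measurable_fun_ler => //; exact: measurable_rwS.
Qed.

(* Condition (h4) is what lets [h x + z] stand for [h (x + z)]. *)
Lemma incr_from0_excursion_sub_A2_tau x0 x z :
  (forall x t, x0 <= x -> 0 <= t -> h (x + t) <= h x + t) -> x0 <= x -> 0 <= z ->
  incr_from xi 0 @^-1` excursion h x z `<=` A2 xi h (tau_time xi) (x + z).
Proof.
move=> h4 xx0 z0 w [m [/andP[up pre] before]].
have S_psum k : psum k (incr_from xi 0 w) = S k w by rewrite psum_incr_from rwS0 subr0.
rewrite !S_psum in up pre; rewrite /A2 /=.
have -> : mu_time xi (x + z) w = Some m.
  apply/first_hitP; split=> // i im; rewrite -leNgt.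
  by have /andP[+ _] := before i im; rewrite S_psum.
apply/andP; split; last exact: le_lt_trans (h4 _ _ xx0 z0) pre.
case E: (tau_time xi w) => [k|] //=; have [/andP[k0 Sk] _] := (first_hitP _ _).1 E.
rewrite leqNgt; apply/negP => km.
by have /andP[_] := before k km; rewrite k0 S_psum ltNge Sk.
Qed.

End Excursion.

Section StoppingTime.
Context {d : measure_display} {T : measurableType d} {R : realType}.
Variables (P : probability T R) (xi : nat -> T -> R) (Fn : nat -> set (set T)).
Hypothesis Fn_adm : admissible_filtration P xi Fn.
Variables (h : R -> R) (sigma : T -> option nat).
Hypothesis sigma_stop : stopping_time Fn sigma.

Local Notation S := (rwS xi).

Lemma measurable_stopping_time k : measurable [set w | sigma w = Some k].
Proof. exact: (filtration_measurable Fn_adm (sigma_stop k)). Qed.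

Lemma filtration_le_opt j n : (n <= j.+1)%N -> Fn j [set w | le_opt n (sigma w)].
Proof.
move=> nj; apply/(filtrationE Fn_adm); apply: measurable_le_opt => k kn.
apply/(filtrationE Fn_adm); apply: (filtration_le Fn_adm _ (sigma_stop k)).
by rewrite -ltnS; exact: leq_trans kn nj.
Qed.

Definition last_min j : set T :=
  [set w | le_opt j.+1 (sigma w) /\ forall k, (k <= j)%N -> S j w <= S k w].

Lemma filtration_last_min j : Fn j (last_min j).
Proof.
rewrite (_ : last_min j = [set w | le_opt j.+1 (sigma w)] `&`
                          [set w | forall k, (k <= j)%N -> S j w <= S k w]) //.
apply: (filtration_setI Fn_adm (filtration_le_opt _)) => //.
apply/(filtrationE Fn_adm); apply: measurable_forall => k.
apply: measurable_implies => kj; apply: measurable_bool_set.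
apply: measurable_fun_ler.
  exact: (measurable_rwS_filtration Fn_adm (leqnn j)).
exact: (measurable_rwS_filtration Fn_adm kj).
Qed.

Lemma last_min_rwS_le0 j w : last_min j w -> S j w <= 0.
Proof. by move=> [_ Smin]; rewrite -(rwS0 xi w) Smin. Qed.

Lemma A2_sub_last_min x : 0 <= x -> A2 xi h sigma x `<=`
  \bigcup_j (last_min j `&` [set w | excursion h x (- S j w) (incr_from xi j w)]).
Proof.
move=> x0 w; rewrite /A2 /=; case E: (mu_time xi x w) => [n|] // /andP[sn hn].
have [up below] := (first_hitP _ _).1 E.
have n0 : (0 < n)%N by case: n up {E below sn hn} => //=; rewrite rwS0 ltNge x0.
have [j jn [jmin jlast]] := exists_last_argmin (fun k => S k w) n.-1.
have jn' : (j < n)%N by rewrite (leq_ltn_trans jn) // prednK.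
exists j => //; split.
  split=> [|k kj]; last by apply: jmin; exact: leq_trans kj jn.
  by move: sn; case: (sigma w) => //= k; exact: leq_trans jn'.
exists (n - j)%N; split.
  rewrite !psum_incr_from subnKC ?(ltnW jn') // !ltrD2r up /= -subnS.
  by rewrite -[n in (n - _)%N](prednK n0) subSS subnKC.
move=> i im; have ijn : (j + i < n)%N by rewrite -ltn_subRL.
rewrite !psum_incr_from lerD2r leNgt below //=; apply/implyP => i0.
rewrite subr_gt0 jlast // -{1}[j]addn0 ltn_add2l i0 /= -ltnS prednK //.
Qed.

Definition grid_slice j l n : set T := [set w |
  (n%:R <= l.+1%:R * - S j w) && (l.+1%:R * - S j w < n.+1%:R)].

Lemma filtration_grid_slice j l n : Fn j (grid_slice j l n).
Proof.
have mS : measurable_fun setT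
    (fun w : g_sigma_algebraType (Fn j) => l.+1%:R * - S j w).
  apply: measurable_funM => //.
  apply: measurable_funN.
  exact: (measurable_rwS_filtration Fn_adm (leqnn j)).
apply/(filtrationE Fn_adm); apply/measurable_bool_set/measurable_and.
  exact: measurable_fun_ler.
exact: measurable_fun_ltr.
Qed.

Lemma trivIset_grid_slice j l : trivIset setT (grid_slice j l).
Proof.
apply/trivIsetP => n n' _ _ nn'; apply/seteqP; split => // w [/andP[lo hi] /andP[lo' hi']].
have := le_lt_trans lo hi'; have := le_lt_trans lo' hi; rewrite !ltr_nat !ltnS => n'n nn''.
by move/negP: nn'; apply; rewrite eqn_leq nn'' n'n.
Qed.

(* [-S_j] is rounded up to the grid of mesh [1/(l+1)]. *)
Definition grid_event x j l : set T := [set w | exists n,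
  (last_min j `&` grid_slice j l n `&`
   incr_from xi j @^-1` excursion h x (n.+1%:R / l.+1%:R)) w].

Lemma measurable_grid_event x j l : measurable (grid_event x j l).
Proof.
apply: measurable_exists => n; apply: measurableI; first apply: measurableI.
- exact: (filtration_measurable Fn_adm (filtration_last_min j)).
- exact: (filtration_measurable Fn_adm (filtration_grid_slice j l n)).
- exact: (measurable_incr_from_preimage Fn_adm _ (measurable_excursion h x _)).
Qed.

Lemma last_min_excursion_sub_grid_liminf x j :
  last_min j `&` [set w | excursion h x (- S j w) (incr_from xi j w)] `<=`
  \bigcup_k [set w | forall l, (k <= l)%N -> grid_event x j l w].
Proof.
move=> w [lmin exc]; have Z0 : 0 <= - S j w by rewrite oppr_ge0 last_min_rwS_le0.
have [g g0 stable] := excursion_right_stable exc.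
have [k approx] := grid_point_approx Z0 g0.
exists k => // l kl; exists (Num.truncn (l.+1%:R * - S j w)).
split; last exact/stable/approx.
by split=> //; apply: truncn_itv; rewrite mulr_ge0.
Qed.

Hypothesis xi_id : ident_distr P xi.
Hypothesis xi_meas : forall n, measurable_fun setT (xi n).
Variables (x K : R).
Hypothesis K_ge0 : 0 <= K.
Hypothesis excursion_le :
  forall z, 0 <= z -> (P (incr_from xi 0 @^-1` excursion h x z) <= K%:E)%E.

Lemma measure_grid_event_le j l : (P (grid_event x j l) <= K%:E * P (last_min j))%E.
Proof.
pose F n := last_min j `&` grid_slice j l n.
have FF n : Fn j (F n).
  exact: (filtration_setI Fn_adm (filtration_last_min j) (filtration_grid_slice j l n)).
have mF n : measurable (F n) := filtration_measurable Fn_adm (FF n).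
pose Ex n := incr_from xi j @^-1` excursion h x (n.+1%:R / l.+1%:R).
have mFEx n : measurable (F n `&` Ex n).
  apply: measurableI => //.
  exact: (measurable_incr_from_preimage Fn_adm _ (measurable_excursion h x _)).
apply: le_trans (measure_sigma_subadditive P mFEx (measurable_grid_event x j l) _) _.
  by move=> w [n Ew]; exists n.
apply: (@le_trans _ _ (\sum_(0 <= n <oo) (K%:E * P (F n)))%E).
  apply: lee_nneseries => [n _ _|n _]; first exact: measure_ge0.
  rewrite [leLHS](_ : _ = P (F n) * P (incr_from xi 0 @^-1` excursion h x (n.+1%:R / l.+1%:R)))%E.
    rewrite muleC; apply: lee_wpmul2r; first exact: measure_ge0.
    by apply: excursion_le; exact: divr_ge0.
  exact: (incr_from_indep Fn_adm xi_id (measurable_excursion h x _) (FF n)).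
rewrite nneseriesZl; last by move=> n _; exact: measure_ge0.
apply: lee_wpmul2l; first by rewrite lee_fin.
have tF : trivIset setT F by apply/trivIset_setIl/trivIset_grid_slice.
have := measure_bigcup P setT F (fun n _ => mF n) tF.
rewrite (eq_eseriesl _ (Q := xpredT)) => [<-|n]; last by rewrite /= in_setT.
apply: le_measure; rewrite ?inE; first exact: bigcupT_measurable.
  exact: (filtration_measurable Fn_adm (filtration_last_min j)).
by move=> w [n _ []].
Qed.

Lemma measure_A2_le : 0 <= x ->
  (P (A2 xi h sigma x) <= K%:E * \int[P]_w opt_to_ereal (sigma w))%E.
Proof.
move=> x0; pose C j := \bigcup_k [set w | forall l, (k <= l)%N -> grid_event x j l w].
have mC j : measurable (C j).
  apply: bigcupT_measurable => k; apply: measurable_forall => l.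
  by apply: measurable_implies => _; exact: measurable_grid_event.
have mA2 := measurable_A2 h xi_meas x measurable_stopping_time.
apply: le_trans (measure_sigma_subadditive P mC mA2 _) _.
  move=> w /(A2_sub_last_min x0) [j _ Cw]; exists j => //.
  exact: last_min_excursion_sub_grid_liminf.
apply: (@le_trans _ _ (\sum_(0 <= j <oo) (K%:E * P (last_min j)))%E).
  apply: lee_nneseries => [j _ _|j _]; first exact: measure_ge0.
  apply: measure_liminf_le => l; first exact: measurable_grid_event.
  exact: measure_grid_event_le.
rewrite nneseriesZl; last by move=> j _; exact: measure_ge0.
apply: lee_wpmul2l; first by rewrite lee_fin.
rewrite -nneseries_measure_le_opt; last exact: measurable_stopping_time.
apply: lee_nneseries => [j _ _|j _]; first exact: measure_ge0.
apply: le_measure; rewrite ?inE.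
- exact: (filtration_measurable Fn_adm (filtration_last_min j)).
- by apply: measurable_le_opt => k _; exact: measurable_stopping_time.
- by move=> w [].
Qed.

End StoppingTime.

Section Delta.
Context {d : measure_display} {T : measurableType d} {R : realType}.
Variables (P : probability T R) (xi : nat -> T -> R) (h : R -> R).
Hypothesis xi_meas : forall n, measurable_fun setT (xi n).
Hypothesis tailF_gt0 : forall x, 0 < tailF P (xi 1%N) x.

Local Notation Fbar := (tailF P (xi 1%N)).

Lemma tailF_le x y : x <= y -> Fbar y <= Fbar x.
Proof.
have mle z : measurable [set w | xi 1%N w <= z].
  by apply/measurable_bool_set/measurable_fun_ler.
move=> xy; rewrite /tailF /cdf lerD2l lerN2.
apply: fine_le; rewrite ?fin_num_measure //.
by apply: le_measure; rewrite ?inE // => w /= /le_trans; apply.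
Qed.

Lemma ratio_le_delta s x y : x <= y ->
  ((fine (P (A2 xi h s y)) / Fbar y)%:E <= delta P xi h s x)%E.
Proof. by move=> xy; apply: ereal_sup_ubound; exists y. Qed.

Lemma delta_ge0 s x : (0 <= delta P xi h s x)%E.
Proof.
apply: le_trans (ratio_le_delta s (lexx x)).
by rewrite lee_fin divr_ge0 ?fine_ge0 ?measure_ge0 // ltW.
Qed.

Variables (Fn : nat -> set (set T)) (sigma : T -> option nat) (x0 : R).
Hypothesis Fn_adm : admissible_filtration P xi Fn.
Hypothesis xi_id : ident_distr P xi.
Hypothesis sigma_stop : stopping_time Fn sigma.
Hypothesis sigma_mean : finite_mean_time P sigma.
Hypothesis h4 : forall x t, x0 <= x -> 0 <= t -> h (x + t) <= h x + t.

Lemma delta_le_mean_mul_delta_tau x : Num.max x0 0 <= x ->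
  (delta P xi h sigma x <=
   (fine (\int[P]_w opt_to_ereal (sigma w)) + 1)%:E * delta P xi h (tau_time xi) x)%E.
Proof.
rewrite ge_max => /andP[xx0 x_ge0]; set E := (\int[P]_w _)%E.
have E_ge0 : (0 <= E)%E.
  by apply: integral_ge0 => w _; case: (sigma w) => //= n; rewrite lee_fin.
have E_fin : E \is a fin_num by rewrite ge0_fin_numE.
have e_ge0 : 0 <= fine E := fine_ge0 E_ge0.
have [->|delta_fin] := eqVneq (delta P xi h (tau_time xi) x) +oo%E.
  by rewrite mulry gtr0_sg ?mul1e ?leey // ltr_pwDr.
have D_fin : delta P xi h (tau_time xi) x \is a fin_num.
  by rewrite ge0_fin_numE ?delta_ge0 // ltey delta_fin.
set D := fine (delta P xi h (tau_time xi) x).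
have D_ge0 : 0 <= D by apply: fine_ge0; exact: delta_ge0.
apply: ge_ereal_sup => _ [y xy <-]; rewrite -(fineK D_fin) -EFinM lee_fin.
have excursion_le z : 0 <= z ->
    (P (incr_from xi 0 @^-1` excursion h y z) <= (D * Fbar y)%:E)%E.
  move=> z0; have mA := measurable_A2 h xi_meas (y + z) (measurable_tau xi_meas).
  apply: (@le_trans _ _ (P (A2 xi h (tau_time xi) (y + z)))).
    apply: le_measure; rewrite ?inE //.
      exact: (measurable_incr_from_preimage Fn_adm _ (measurable_excursion h y z)).
    exact: (incr_from0_excursion_sub_A2_tau h4 (le_trans xx0 xy) z0).
  have yz : x <= y + z by apply: le_trans xy _; rewrite lerDl.
  have := ratio_le_delta (tau_time xi) yz.
  rewrite -(fineK D_fin) lee_fin ler_pdivrMr // => A_le.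
  rewrite -(fineK (fin_num_measure P _ mA)) lee_fin; apply: le_trans A_le _.
  by rewrite ler_wpM2l // tailF_le // lerDl.
have A_le := measure_A2_le Fn_adm sigma_stop xi_id xi_meas
  (mulr_ge0 D_ge0 (ltW (tailF_gt0 y))) excursion_le (le_trans x_ge0 xy).
have mA := measurable_A2 h xi_meas y (measurable_stopping_time Fn_adm sigma_stop).
rewrite -/E -(fineK E_fin) -EFinM -(fineK (fin_num_measure P _ mA)) lee_fin in A_le.
rewrite ler_pdivrMr ?tailF_gt0 //; apply: le_trans A_le _.
rewrite -/D; have := mulr_ge0 D_ge0 (ltW (tailF_gt0 y)); nra.
Qed.

End Delta.

Unset Implicit Arguments.
Theorem lemma4 (d : measure_display) (T : measurableType d) (R : realType)
  (P : probability T R) (xi : nat -> T -> R) (m : R) (h : R -> R) :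
  (forall n, measurable_fun setT (xi n)) ->
  mutually_indep P xi ->
  ident_distr P xi ->
  0 < m ->
  P.-integrable setT (EFin \o xi 1%N) ->
  (\int[P]_w (xi 1%N w)%:E = (- m)%:E)%E ->
  (forall x, 0 < tailF P (xi 1%N) x) ->
  (forall c, 0 < c ->
     (tailF P (xi 1%N) (x - c) / tailF P (xi 1%N) x) @[x --> +oo] --> (1 : R)) ->
  (forall x, 0 <= x -> 0 <= h x) ->
  (forall x, 0 <= x -> h x <= x / 2) ->
  h x @[x --> +oo] --> +oo ->
  (tailF P (xi 1%N) (x - h x) / tailF P (xi 1%N) x) @[x --> +oo] --> (1 : R) ->
  (exists x0, forall x t, x0 <= x -> 0 <= t -> h (x + t) <= h x + t) ->
  delta P xi h (tau_time xi) x @[x --> +oo] --> 0%E ->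
  forall (Fn : nat -> set (set T)) (sigma : T -> option nat),
    admissible_filtration P xi Fn ->
    stopping_time Fn sigma ->
    finite_mean_time P sigma ->
    delta P xi h sigma x @[x --> +oo] --> 0%E.
Proof.
move=> xi_meas _ xi_id _ _ _ tailF_gt0 _ _ _ _ _ [x0 h4] delta_tau_cvg
  Fn sigma Fn_adm sigma_stop sigma_mean.
set c := (fine (\int[P]_w opt_to_ereal (sigma w)) + 1)%:E.
apply: (@squeeze_cvge _ _ _ _ (fun=> 0%E) _ (fun x => c * delta P xi h (tau_time xi) x)%E).
- near=> x; rewrite delta_ge0 //=.
  apply: (delta_le_mean_mul_delta_tau xi_meas tailF_gt0 Fn_adm xi_id sigma_stop sigma_mean h4).
  by near: x; apply: nbhs_pinfty_ge; rewrite num_real.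
- exact: cvg_cst.
- by rewrite -(mule0 c); apply: cvgeM => //; exact: cvg_cst.
Unshelve. all: by end_near.
Qed.
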